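(* Let $q\ge2$ and let $b,c$ be positive integers. Then either there is no $(b,c)$-coloring of $H(n,q)$ for any positive integer $n$, or there exists $n_0=n_0(b,c;q)$ such that a $(b,c)$-coloring of $H(n,q)$ exists if and only if $n\ge n_0$.
   Context: The Hamming graph $H(n,q)$ has vertex set $\mathbb{Z}_q^n$, two vertices adjacent iff they differ in exactly one coordinate. A $(b,c)$-coloring of $H(n,q)$ is a surjective map onto $\{1,2\}$ in which each color-1 vertex has exactly $b$ neighbours of color 2 and each color-2 vertex has exactly $c$ neighbours of color 1. *)

From mathcomp Require Import all_boot.
Set Implicit Arguments. Unset Strict Implicit. Unset Printing Implicit Defensive.

Definition hvertex (n q : nat) := {ffun 'I_n -> 'I_q}.

Definition hdist (n q : nat) (x y : hvertex n q) : nat := #|[pred i | x i != y i]|.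

Definition hadj (n q : nat) (x y : hvertex n q) : bool := hdist x y == 1.

Definition color1 : 'I_2 := ord0.
Definition color2 : 'I_2 := ord_max.

Definition is_bc_coloring (n q b c : nat) (f : hvertex n q -> 'I_2) : Prop :=
  (forall k : 'I_2, exists x, f x = k) /\
  (forall x, f x = color1 -> #|[pred y | hadj x y && (f y == color2)]| = b) /\
  (forall x, f x = color2 -> #|[pred y | hadj x y && (f y == color1)]| = c).

Definition has_bc_coloring (n q b c : nat) : Prop :=
  exists f : hvertex n q -> 'I_2, is_bc_coloring b c f.

(* A (b,c)-coloring of H(n,q) lifts to H(n+1,q) by ignoring the last
   coordinate: a neighbour that differs from x in the last coordinate agrees
   with x elsewhere, so it has the colour of x and is never counted.  The set
   of n admitting a coloring is therefore upward closed, and either empty or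
   equal to all n above its least element. *)
From mathcomp Require Import all_boot.
From Stdlib Require Import ClassicalEpsilon.

Section SnocVertex.
Variables (n q : nat).

Definition hinit (x : hvertex n.+1 q) : hvertex n q :=
  [ffun i => x (lift ord_max i)].

Definition hsnoc (z : hvertex n q) (a : 'I_q) : hvertex n.+1 q :=
  [ffun i => if unlift ord_max i is Some j then z j else a].

Lemma hsnocK a : cancel (hsnoc^~ a) hinit.
Proof. by move=> z; apply/ffunP=> j; rewrite !ffunE liftK. Qed.

Lemma hsnoc_last z a : hsnoc z a ord_max = a.
Proof. by rewrite ffunE unlift_none. Qed.

Lemma hinitK x : hsnoc (hinit x) (x ord_max) = x.
Proof. by apply/ffunP=> i; rewrite !ffunE; case: unliftP => [j ->|->]; rewrite ?ffunE. Qed.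

Lemma hdist_sum m (x y : hvertex m q) : hdist x y = \sum_i (x i != y i).
Proof.
rewrite /hdist -sum1_card big_mkcond /=.
by apply: eq_bigr => i _; rewrite inE; case: (x i != y i).
Qed.

Lemma hdist_eq0 m (x y : hvertex m q) : hdist x y = 0 -> x = y.
Proof. by move/card0_eq=> xy; apply/ffunP=> i; have := xy i; rewrite inE => /negbFE/eqP. Qed.

Lemma hdist_last x y :
  hdist x y = hdist (hinit x) (hinit y) + (x ord_max != y ord_max).
Proof.
rewrite !hdist_sum big_ord_recr /=; congr (_ + _).
by apply: eq_bigr => i _; rewrite !ffunE; congr (x _ != y _);
  apply/val_inj; exact: (esym (lift_max i)).
Qed.

Lemma hadj_hsnoc z z' a : hadj (hsnoc z a) (hsnoc z' a) = hadj z z'.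
Proof. by rewrite /hadj hdist_last !hsnocK !hsnoc_last eqxx addn0. Qed.

Lemma hadj_last_neq {x y} :
  hadj x y -> x ord_max != y ord_max -> hinit x = hinit y.
Proof. by rewrite /hadj hdist_last => /eqP + xy; rewrite xy addn1 => -[/hdist_eq0]. Qed.

(* The neighbours of [x] of a colour other than that of [x] all share its last
   coordinate, so [hsnoc _ (x ord_max)] matches them with those of [hinit x]. *)
Lemma card_hadj_hinit (f : hvertex n q -> 'I_2) (col : 'I_2) x :
  f (hinit x) != col ->
  #|[pred y | hadj x y && (f (hinit y) == col)]| =
  #|[pred z | hadj (hinit x) z && (f z == col)]|.
Proof.
move=> fx; rewrite -(card_imset _ (can_inj (hsnocK (x ord_max)))).
apply: eq_card => y; rewrite !inE; apply/andP/imsetP => [[xy fy]|[z]].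
  have last_eq : x ord_max = y ord_max.
    by apply/eqP; apply: contraNT fx => /(hadj_last_neq xy) ->.
  exists (hinit y); last by rewrite last_eq hinitK.
  by rewrite inE fy andbT -(hadj_hsnoc _ _ (x ord_max)) {2}last_eq !hinitK.
rewrite inE => /andP[xz fz] ->.
by rewrite hsnocK fz; split; rewrite // -[X in hadj X _]hinitK hadj_hsnoc.
Qed.

Lemma has_bc_coloringS b c :
  0 < q -> has_bc_coloring n q b c -> has_bc_coloring n.+1 q b c.
Proof.
move=> q_gt0 [f [f_surj [f1 f2]]]; exists (f \o hinit); split; [|split].
- by move=> k; have [x <-] := f_surj k; exists (hsnoc x (Ordinal q_gt0)); rewrite /= hsnocK.
- by move=> x /= fx; rewrite card_hadj_hinit ?fx //; apply: f1.
- by move=> x /= fx; rewrite card_hadj_hinit ?fx //; apply: f2.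
Qed.

End SnocVertex.

Lemma upward_closed_threshold (P : nat -> Prop) :
  (forall n, P n -> P n.+1) ->
  (forall n, ~ P n) \/ (exists n0, forall n, P n <-> n0 <= n).
Proof.
move=> PS; pose p n : bool := excluded_middle_informative (P n).
have pP n : p n <-> P n by rewrite /p; case: excluded_middle_informative.
have [[m pm]|no_p] := excluded_middle_informative (exists n, p n); last first.
  by left=> n Pn; apply: no_p; exists n; apply/pP.
right; case: (ex_minnP (ex_intro _ m pm)) => n0 /pP Pn0 n0_min.
exists n0 => n; split=> [/pP /n0_min //|/subnK <-].
by elim: (n - n0) => [//|k IHk]; apply: PS.
Qed.

Theorem proposition10 (q b c : nat) :
  2 <= q -> 0 < b -> 0 < c ->
  (forall n : nat, 0 < n -> ~ has_bc_coloring n q b c) \/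
  (exists n0 : nat, forall n : nat, 0 < n -> (has_bc_coloring n q b c <-> n0 <= n)).
Proof.
move=> q_ge2 _ _; have q_gt0 : 0 < q by apply: ltnW.
have [never|[n0 thr]] :
    (forall n, ~ (0 < n /\ has_bc_coloring n q b c)) \/
    exists n0, forall n, 0 < n /\ has_bc_coloring n q b c <-> n0 <= n.
  by apply: upward_closed_threshold => n [_ col]; split; last exact: has_bc_coloringS.
- by left=> n n_gt0 col; apply: (never n).
- by right; exists n0 => n n_gt0; rewrite -thr; split=> [|[]].
Qed.
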